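(* Let $G$ be a graph with a single vertex and a single face cellularly embedded in a closed oriented surface $S$ of genus $g\ge2$, let $\omega,\eta$ be the co-boundaries defined in the context, and let $\alpha$ be a potential from which $\omega$ derives. Then for every closed walk $c$ in $\widetilde G$, \[A(c)=\sum_{e=xy\in c}\frac{\alpha(x)+\alpha(y)}{2}\,\eta(p(e)),\] where the sum runs over the successive arcs $e$ of $c$, with $x$ and $y$ the tail and head of $e$.
   Context: $G$ has one vertex and $2g$ loop edges; $\overset{\leftrightarrow}{L}$ is its set of arcs (two opposite arcs $e,\bar e$ per edge). $p:\widetilde S\to S$ is the universal covering and $\widetilde G=p^{-1}(G)$, whose faces tile the plane $\widetilde S$; $\widetilde V=p^{-1}(\text{vertex})$. A co-boundary is a map $\omega:\overset{\leftrightarrow}{L}\to\mathbb R$ with $\omega(\bar e)=-\omega(e)$. A co-boundary $\omega$ derives from a potential $\alpha:\widetilde V\to\mathbb R$ if $\omega(p(v_1v_2))=\alpha(v_2)-\alpha(v_1)$ for every arc $v_1v_2$ of $\widetilde G$. Fix a face $D$ of $\widetilde G$ with counterclockwise boundary arcs $(e_1,\dots,e_{4g})$ (identified with their projections); there exist indices $1\le i<j<k<l\le 4g$ with $e_k=\bar e_i$ and $e_l=\bar e_j$. Set $\omega(e_i)=-\omega(e_k)=1$ and $\omega=0$ on all other arcs, and $\eta(e_j)=-\eta(e_l)=1$ and $\eta=0$ on all other arcs. For a closed walk $c$ in $\widetilde G$, $A(c)=\sum_f\mathrm{wind}(c,f)$, summing over faces $f$ of $\widetilde G$ the winding number of $c$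 around an interior point of $f$ (signed area). *)

From HB Require Import structures.
From mathcomp Require Import all_boot all_order all_algebra all_fingroup.
From mathcomp Require Import boolp reals.
From Stdlib Require Import Relations.

Set Implicit Arguments.
Unset Strict Implicit.
Unset Printing Implicit Defensive.
Import Order.TTheory GRing.Theory Num.Theory.
Local Open Scope ring_scope.

(** Arcs of G: an edge index x : 'I_(2g) together with an orientation bit;
    (x, true) and (x, false) are the two opposite arcs of edge x. *)
Definition arcT (g : nat) : finType := ('I_(2 * g) * bool)%type.

Definition rev_arc (g : nat) (a : arcT g) : arcT g := (a.1, ~~ a.2).

(** The embedding of G in the oriented surface S is given by its rotation
    system: sigma is the counterclockwise cyclic order of the arcs (viewed as
    leaving the single vertex) around the vertex.  The counterclockwise
    face-boundary successor of an arc d (the next arc after d on the boundary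
    of the face lying to the left of d) is sigma^-1 (rev d). *)
Definition face_succ (g : nat) (sigma : {perm arcT g}) (d : arcT g) : arcT g :=
  (sigma^-1)%g (rev_arc d).

(** Counterclockwise boundary arcs e_0, ..., e_(4g-1) of the face, starting at
    the arc d0 (0-based indexing; the paper uses e_1..e_4g). *)
Definition bd_arc (g : nat) (sigma : {perm arcT g}) (d0 : arcT g) (m : nat)
  : arcT g := iter m (face_succ sigma) d0.

Definition bd_word (g : nat) (sigma : {perm arcT g}) (d0 : arcT g)
  : seq (arcT g) := mkseq (bd_arc sigma d0) (4 * g).

(** Its vertices are the elements of pi_1(S) = < arcs | a.(rev a) = 1, r = 1 >
    (r the face boundary word), represented as words in the arcs modulo the
    congruence [pi_eqv r] below.  The arc of \tilde G lifting a : arc with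
    tail [u] has head [u ++ [:: a]]. *)
Inductive pi_step (g : nat) (r : seq (arcT g)) : seq (arcT g) -> seq (arcT g) -> Prop :=
  | pi_free (u v : seq (arcT g)) (a : arcT g) :
      pi_step r (u ++ a :: rev_arc a :: v) (u ++ v)
  | pi_rel (u v : seq (arcT g)) :
      pi_step r (u ++ r ++ v) (u ++ v).

Definition pi_eqv (g : nat) (r : seq (arcT g)) : relation (seq (arcT g)) :=
  clos_refl_sym_trans _ (pi_step r).

Definition same_vertex (g : nat) (r : seq (arcT g)) (u v : seq (arcT g)) : bool :=
  `[< pi_eqv r u v >].

(** Integer 1-chain of the walk in \tilde G starting at vertex [gamma] and
    following the arcs [s] (the walk's arcs are the lifts), evaluated on the
    edge of \tilde G with tail [delta] and label x (oriented by (x,true)). *)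
Fixpoint walk_chain (g : nat) (r : seq (arcT g)) (gamma s : seq (arcT g))
  (delta : seq (arcT g)) (x : 'I_(2 * g)) : int :=
  match s with
  | [::] => 0
  | a :: s' =>
      (if (a == ((x, true) : arcT g)) && same_vertex r gamma delta then 1 else 0)
    - (if (a == ((x, false) : arcT g)) && same_vertex r (rcons gamma a) delta
       then 1 else 0)
    + walk_chain r (rcons gamma a) s' delta x
  end.

(** Faces of \tilde G are the lifts beta.D of the face of G, one for each
    vertex beta, with counterclockwise boundary the closed walk from beta
    along r.  A 2-chain is a finite list of (face, coefficient) pairs. *)
Definition face_chain (g : nat) (r : seq (arcT g)) (L : seq (seq (arcT g) * int))
  (delta : seq (arcT g)) (x : 'I_(2 * g)) : int :=
  \sum_(p <- L) p.2 * walk_chain r p.1 r delta x.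

Definition bounds (g : nat) (r : seq (arcT g)) (L : seq (seq (arcT g) * int))
  (gamma s : seq (arcT g)) : Prop :=
  forall delta x, face_chain r L delta x = walk_chain r gamma s delta x.

(** Signed area A(c) = sum_f wind(c, f): the winding number of the closed walk
    c around face f is the coefficient of f in the (unique) finitely supported
    2-chain whose boundary is c.  [signed_area r gamma s a] says A(c) = a. *)
Definition signed_area (R : realType) (g : nat) (r : seq (arcT g))
  (gamma s : seq (arcT g)) (a : R) : Prop :=
  exists L, bounds r L gamma s /\ a = (\sum_(p <- L) p.2)%:~R.

Definition pair_cochain (R : realType) (g : nat) (sigma : {perm arcT g})
  (d0 : arcT g) (i k : nat) (a : arcT g) : R :=
  if a == bd_arc sigma d0 i then 1
  else if a == bd_arc sigma d0 k then -1 else 0.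

Fixpoint walk_sum (R : realType) (g : nat) (alpha : seq (arcT g) -> R)
  (eta : arcT g -> R) (gamma s : seq (arcT g)) : R :=
  match s with
  | [::] => 0
  | a :: s' =>
      (alpha gamma + alpha (rcons gamma a)) / 2 * eta a
      + walk_sum alpha eta (rcons gamma a) s'
  end.

(* Pair 1-chains of the universal cover with the weight (alpha(x) + alpha(y))/2 * eta(p(xy))
   on each edge xy; on the chain of a walk this pairing is the right-hand side.  Along the
   boundary of a face the potential alpha jumps only at e_i (by +1) and at e_k (by -1), so it
   equals alpha_0 + 1 at both ends of e_j and alpha_0 at both ends of e_l: every face boundary
   pairs to 1.  Hence a closed walk bounding the 2-chain sum n_f f pairs to sum n_f = A(c).
   Conversely every closed walk bounds some 2-chain: a derivation of its closedness in pi_1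
   cancels backtracks and inserts or deletes face boundaries, each of which changes the
   walk's chain by the boundary of an explicit 2-chain. *)

From HB Require Import structures.
From mathcomp Require Import all_boot all_order all_algebra all_fingroup.
From mathcomp Require Import boolp reals.
From mathcomp Require Import ring zify.
From Stdlib Require Import Relation_Operators.
Import Order.TTheory GRing.Theory Num.Theory.
Set Implicit Arguments.
Unset Strict Implicit.
Unset Printing Implicit Defensive.
Local Open Scope ring_scope.

Section ClassRepresentatives.

Variables (T : eqType) (e : rel T).
Hypotheses (e_sym : symmetric e) (e_trans : transitive e).

Fixpoint class_reps (V : seq T) : seq T :=
  if V is v :: V' then
    let D := class_reps V' in if has (e v) D then D else v :: D
  else [::].

Lemma has_class_reps u V : has (e u) (class_reps V) = has (e u) V.
Proof.
elim: V => //= v V IH; case: ifP => [/hasP[d dD evd] | _] /=; rewrite IH //.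
case euv: (e u v) => //=; rewrite -IH; apply/hasP; exists d => //.
exact: e_trans euv evd.
Qed.

Lemma big_class_reps (M : nmodType) (h : T -> M) u V :
  (forall a b, e a b -> h a = h b) ->
  \sum_(d <- class_reps V | e u d) h d = if has (e u) V then h u else 0.
Proof.
move=> h_e; elim: V => [|v V IH] /=; first by rewrite big_nil.
case: ifP => [/hasP[d dD evd] | /hasPn vD].
  rewrite IH; case euv: (e u v) => //=; case: ifP => // /negbT/negP[].
  by rewrite -has_class_reps; apply/hasP; exists d => //; exact: e_trans euv evd.
rewrite big_cons IH; case euv: (e u v) => //=.
suff -> : has (e u) V = false by rewrite addr0 (h_e _ _ euv).
apply/negbTE; rewrite -has_class_reps; apply/hasPn => d dD; apply: contraNN (vD d dD).
by apply: e_trans; rewrite e_sym.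
Qed.

End ClassRepresentatives.

Section UniversalCover.

Variables (g : nat) (r : seq (arcT g)).

Lemma pi_eqv_catr u v w : pi_eqv r u v -> pi_eqv r (u ++ w) (v ++ w).
Proof.
elim=> [x y [u' v' a | u' v'] | x | x y _ IH | x y z _ IH1 _ IH2].
- by apply: rst_step; rewrite -!catA; apply: pi_free.
- by apply: rst_step; rewrite -!catA; apply: pi_rel.
- exact: rst_refl.
- exact: rst_sym.
- exact: rst_trans IH1 IH2.
Qed.

Lemma pi_eqv_rcons u v a : pi_eqv r u v -> pi_eqv r (rcons u a) (rcons v a).
Proof. by rewrite -!cats1; apply: pi_eqv_catr. Qed.

Lemma pi_eqv_backtrack u a : pi_eqv r (rcons (rcons u a) (rev_arc a)) u.
Proof.
by apply: rst_step; rewrite -!cats1 -catA -[u in pi_step _ _ u]cats0; apply: pi_free.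
Qed.

Lemma pi_eqv_relator u : pi_eqv r (u ++ r) u.
Proof.
by apply: rst_step; rewrite -[u ++ r]cats0 -catA -[u in pi_step _ _ u]cats0; apply: pi_rel.
Qed.

Lemma same_vertex_refl : reflexive (same_vertex r).
Proof. by move=> u; apply/asboolP; apply: rst_refl. Qed.

Lemma same_vertex_sym : symmetric (same_vertex r).
Proof. by move=> u v; apply/idP/idP => /asboolP uv; apply/asboolP; apply: rst_sym. Qed.

Lemma same_vertex_trans : transitive (same_vertex r).
Proof. by move=> v u w /asboolP uv /asboolP vw; apply/asboolP; apply: rst_trans uv vw. Qed.

Lemma same_vertex_eqv u u' : pi_eqv r u u' -> same_vertex r u =1 same_vertex r u'.
Proof.
move=> /asboolP uu' v; apply/idP/idP; apply: same_vertex_trans => //.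
by rewrite same_vertex_sym.
Qed.

Definition arc_chain (u : seq (arcT g)) (a : arcT g) delta (x : 'I_(2 * g)) : int :=
  (if (a == ((x, true) : arcT g)) && same_vertex r u delta then 1 else 0)
  - (if (a == ((x, false) : arcT g)) && same_vertex r (rcons u a) delta then 1 else 0).

Lemma walk_chain_eqv gamma gamma' s delta x : pi_eqv r gamma gamma' ->
  walk_chain r gamma s delta x = walk_chain r gamma' s delta x.
Proof.
elim: s gamma gamma' => //= a s IH gamma gamma' eqv.
rewrite (same_vertex_eqv eqv) (same_vertex_eqv (pi_eqv_rcons a eqv)).
by rewrite (IH _ (rcons gamma' a)) //; apply: pi_eqv_rcons.
Qed.

Lemma walk_chain_cat gamma s1 s2 delta x :
  walk_chain r gamma (s1 ++ s2) delta x
  = walk_chain r gamma s1 delta x + walk_chain r (gamma ++ s1) s2 delta x.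
Proof.
elim: s1 gamma => [|a s1 IH] gamma /=; first by rewrite cats0 add0r.
by rewrite IH cat_rcons addrA.
Qed.

Lemma walk_chain_backtrack u a delta x : walk_chain r u [:: a; rev_arc a] delta x = 0.
Proof.
rewrite /= (same_vertex_eqv (pi_eqv_backtrack u a)).
case: a => y [] /=; rewrite !xpair_eqE /= ?andbT ?andbF;
  by case: (y == x); case: same_vertex; rewrite /= ?subrr ?subr0 ?sub0r ?addrN ?addNr.
Qed.

Lemma face_chain_cat L1 L2 delta x :
  face_chain r (L1 ++ L2) delta x = face_chain r L1 delta x + face_chain r L2 delta x.
Proof. by rewrite /face_chain big_cat. Qed.

Lemma face_chain_opp L delta x :
  face_chain r [seq (p.1, - p.2) | p <- L] delta x = - face_chain r L delta x.
Proof. by rewrite /face_chain big_map -sumrN; apply: eq_bigr => p _; rewrite mulNr. Qed.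

Lemma pi_eqv_bounded w1 w2 : pi_eqv r w1 w2 -> exists L, forall delta x,
  face_chain r L delta x = walk_chain r [::] w1 delta x - walk_chain r [::] w2 delta x.
Proof.
elim=> [w1' w2' [u v a | u v] | w | w1' w2' _ [L IH] | w1' w2' w3 _ [L1 IH1] _ [L2 IH2]].
- exists [::] => delta x; rewrite /face_chain big_nil.
  rewrite -[_ :: _]/([:: a; rev_arc a] ++ v) !walk_chain_cat walk_chain_backtrack add0r.
  rewrite (@walk_chain_eqv (_ ++ _) u) ?subrr //.
  by rewrite cat0s -cat_rcons cats1; apply: pi_eqv_backtrack.
- exists [:: (u, 1%:Z)] => delta x.
  rewrite /face_chain big_seq1 mul1r !walk_chain_cat /= (@walk_chain_eqv (u ++ r) u).
    by rewrite addrCA addrK.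
  exact: pi_eqv_relator.
- by exists [::] => delta x; rewrite /face_chain big_nil subrr.
- by exists [seq (p.1, - p.2) | p <- L] => delta x; rewrite face_chain_opp IH opprB.
- by exists (L1 ++ L2) => delta x; rewrite face_chain_cat IH1 IH2 addrA subrK.
Qed.

Lemma closed_walk_bounded gamma s :
  pi_eqv r (gamma ++ s) gamma -> exists L, bounds r L gamma s.
Proof.
move=> /pi_eqv_bounded[L HL]; exists L => delta x.
by rewrite HL walk_chain_cat cat0s addrC addKr.
Qed.

End UniversalCover.

Section Pairing.

Variables (R : realType) (g : nat) (r : seq (arcT g)).
Variables (alpha : seq (arcT g) -> R) (eta : arcT g -> R).
Hypothesis alpha_eqv : forall u v, pi_eqv r u v -> alpha u = alpha v.
Hypothesis etaN : forall a, eta (rev_arc a) = - eta a.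

Definition edge_weight (d : seq (arcT g)) (x : 'I_(2 * g)) : R :=
  (alpha d + alpha (rcons d ((x, true) : arcT g))) / 2 * eta (x, true).

(* Vertices of the cover are classes of words, so the pairing sums over one word per class. *)
Definition chain_pairing (D : seq (seq (arcT g)))
    (f : seq (arcT g) -> 'I_(2 * g) -> int) : R :=
  \sum_(d <- D) \sum_(x < 2 * g) (f d x)%:~R * edge_weight d x.

Lemma chain_pairingD D f1 f2 :
  chain_pairing D (fun d x => f1 d x + f2 d x)
  = chain_pairing D f1 + chain_pairing D f2.
Proof.
rewrite /chain_pairing -big_split; apply: eq_bigr => d _.
by rewrite -big_split; apply: eq_bigr => x _; rewrite intrD mulrDl.
Qed.

Lemma chain_pairing_face_chain D L :
  chain_pairing D (face_chain r L)
  = \sum_(p <- L) p.2%:~R * chain_pairing D (walk_chain r p.1 r).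
Proof.
rewrite /chain_pairing /face_chain.
under eq_bigr do under eq_bigr do rewrite rmorph_sum mulr_suml.
under eq_bigr do rewrite exchange_big.
rewrite exchange_big; apply: eq_bigr => p _.
rewrite mulr_sumr; apply: eq_bigr => d _.
rewrite mulr_sumr; apply: eq_bigr => x _.
by rewrite rmorphM mulrA.
Qed.

Fixpoint walk_vertices (gamma s : seq (arcT g)) : seq (seq (arcT g)) :=
  gamma :: if s is a :: s' then walk_vertices (rcons gamma a) s' else [::].

Variable V : seq (seq (arcT g)).
Let reps := class_reps (same_vertex r) V.

Lemma big_reps_edge_weight v x : v \in V ->
  \sum_(d <- reps | same_vertex r v d) edge_weight d x = edge_weight v x.
Proof.
move=> vV; rewrite big_class_reps; first last.
- move=> a b /asboolP ab; rewrite /edge_weight (alpha_eqv ab).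
  by rewrite (alpha_eqv (pi_eqv_rcons _ ab)).
- exact: same_vertex_trans.
- exact: same_vertex_sym.
by case: hasP => // -[]; exists v => //; apply: same_vertex_refl.
Qed.

Lemma chain_pairing_arc_chain u a : u \in V -> rcons u a \in V ->
  chain_pairing reps (arc_chain r u a) = (alpha u + alpha (rcons u a)) / 2 * eta a.
Proof.
move=> uV uaV; rewrite /chain_pairing exchange_big (bigD1 a.1) //=.
rewrite [X in _ + X]big1 ?addr0; last first.
  move=> x xa; apply: big1 => d _.
  have ne b : (a == ((x, b) : arcT g)) = false by apply: contraNF xa => /eqP ->.
  by rewrite /arc_chain !ne subrr mul0r.
case: a uaV => y [] uaV; rewrite /arc_chain /= !xpair_eqE eqxx /=.
  rewrite -[RHS]/(edge_weight u y) -(big_reps_edge_weight y uV) [RHS]big_mkcond.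
  apply: eq_bigr => d _.
  by case: same_vertex; rewrite ?subr0 ?mul1r ?mul0r.
rewrite -[RHS]opprK -mulrN -etaN.
rewrite -(alpha_eqv (pi_eqv_backtrack r u (y, false))) addrC.
rewrite -[X in - X]/(edge_weight (rcons u (y, false)) y).
rewrite -(big_reps_edge_weight y uaV) -sumrN [RHS]big_mkcond; apply: eq_bigr => d _.
by case: same_vertex; rewrite ?sub0r ?subr0 ?mulN1r ?mul0r ?oppr0.
Qed.

Lemma chain_pairing_walk_chain gamma s : {subset walk_vertices gamma s <= V} ->
  chain_pairing reps (walk_chain r gamma s) = walk_sum alpha eta gamma s.
Proof.
elim: s gamma => [|a s IH] gamma sub_V.
  by rewrite /chain_pairing big1 // => d _; rewrite big1 // => x _; rewrite mul0r.
have sub_V' : {subset walk_vertices (rcons gamma a) s <= V}.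
  by move=> v vs; apply: sub_V; rewrite inE vs orbT.
have -> : walk_chain r gamma (a :: s)
        = fun d x => arc_chain r gamma a d x + walk_chain r (rcons gamma a) s d x by [].
rewrite chain_pairingD IH // chain_pairing_arc_chain //; first exact/sub_V/mem_head.
by apply: sub_V'; case: (s) => [|? ?]; apply: mem_head.
Qed.

End Pairing.

Lemma sum_ord_mulrn_eq (M : nmodType) (F : nat -> M) N (n : nat) :
  \sum_(m < N) F m *+ (m == n :> nat) = if (n < N)%N then F n else 0.
Proof. by under eq_bigr do rewrite mulrb; rewrite -big_mkcond big_ord1_eq. Qed.

Lemma potential_cat (T : Type) (M : zmodType) (alpha : seq T -> M) (omega : T -> M) u s :
  (forall u a, alpha (rcons u a) - alpha u = omega a) ->
  alpha (u ++ s) = alpha u + \sum_(a <- s) omega a.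
Proof.
move=> incr; elim: s u => [|a s IH] u; first by rewrite cats0 big_nil addr0.
by rewrite -cat_rcons IH big_cons addrA -(incr u a) (addrC (alpha u)) subrK.
Qed.

Section WalkSum.

Variables (R : realType) (g : nat) (alpha : seq (arcT g) -> R) (eta : arcT g -> R).

Lemma walk_sum_rcons beta s a :
  walk_sum alpha eta beta (rcons s a)
  = walk_sum alpha eta beta s + (alpha (beta ++ s) + alpha (beta ++ rcons s a)) / 2 * eta a.
Proof.
elim: s beta => [|b s IH] beta /=; first by rewrite cats0 cats1 addr0 add0r.
by rewrite IH !cat_rcons addrA.
Qed.

Lemma walk_sum_mkseq beta f n :
  walk_sum alpha eta beta (mkseq f n)
  = \sum_(m < n) (alpha (beta ++ mkseq f m) + alpha (beta ++ mkseq f m.+1)) / 2 * eta (f m).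
Proof.
elim: n => [|n IH]; first by rewrite big_ord0.
by rewrite big_ord_recr -IH !mkseqS walk_sum_rcons.
Qed.

End WalkSum.

Lemma pair_cochainN (R : realType) g (sigma : {perm arcT g}) d0 i k a :
  bd_arc sigma d0 k = rev_arc (bd_arc sigma d0 i) ->
  pair_cochain R sigma d0 i k (rev_arc a) = - pair_cochain R sigma d0 i k a.
Proof.
have rev_arcK : involutive (@rev_arc g) by case=> x b; rewrite /rev_arc negbK.
move=> bd_k; rewrite /pair_cochain bd_k (inj_eq (inv_inj rev_arcK)).
rewrite -{1}[bd_arc sigma d0 i]rev_arcK (inj_eq (inv_inj rev_arcK)).
case: (eqVneq a (bd_arc sigma d0 i)) => [->|_]; last by case: ifP; rewrite ?opprK ?oppr0.
by case: (bd_arc sigma d0 i) => x [] /=; rewrite /rev_arc xpair_eqE eqxx.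
Qed.

Section FaceBoundary.

Variables (g : nat) (sigma : {perm arcT g}) (d0 : arcT g).
Hypothesis one_face : forall a b : arcT g, fconnect (face_succ sigma) a b.

Lemma eq_bd_arc m n : (m < 4 * g)%N -> (n < 4 * g)%N ->
  (bd_arc sigma d0 m == bd_arc sigma d0 n) = (m == n).
Proof.
move=> lt_m lt_n; apply/eqP/eqP => [bd_mn | -> //].
have order_d0 : fingraph.order (face_succ sigma) d0 = (4 * g)%N.
  rewrite /fingraph.order (@eq_card _ _ predT) => [|b]; last by rewrite !inE one_face.
  by rewrite card_prod card_ord card_bool mulnC mulnA.
rewrite -(findex_iter (f := face_succ sigma) (x := d0) (i := m)) ?order_d0 //.
rewrite -(findex_iter (f := face_succ sigma) (x := d0) (i := n)) ?order_d0 //.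
by rewrite -/(bd_arc _ _ _) bd_mn.
Qed.

Variable R : realType.

Lemma pair_cochain_bd_arc i k n : (i < k)%N -> (k < 4 * g)%N -> (n < 4 * g)%N ->
  pair_cochain R sigma d0 i k (bd_arc sigma d0 n) = (n == i)%:R - (n == k)%:R.
Proof.
move=> lt_ik lt_k lt_n; rewrite /pair_cochain !eq_bd_arc ?(ltn_trans lt_ik) //.
case: (eqVneq n i) => [->|_]; first by rewrite (ltn_eqF lt_ik) /= subr0.
by case: (n == k); rewrite /= ?subr0 ?sub0r.
Qed.

Variables (i j k l : nat).
Hypotheses (lt_ij : (i < j)%N) (lt_jk : (j < k)%N) (lt_kl : (k < l)%N).
Hypothesis lt_l4g : (l < 4 * g)%N.
Let lt_ik : (i < k)%N := ltn_trans lt_ij lt_jk.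
Let lt_k4g : (k < 4 * g)%N := ltn_trans lt_kl lt_l4g.

Variable alpha : seq (arcT g) -> R.
Hypothesis alpha_incr :
  forall u a, alpha (rcons u a) - alpha u = pair_cochain R sigma d0 i k a.

Lemma potential_bd_prefix beta m : (m <= 4 * g)%N ->
  alpha (beta ++ mkseq (bd_arc sigma d0) m) = alpha beta + ((i < m)%:R - (k < m)%:R).
Proof.
move=> le_m; rewrite (potential_cat _ _ alpha_incr) /mkseq big_map.
rewrite -(subn0 m) -/(index_iota 0 m) big_mkord subn0.
have omega_bd (n : 'I_m) :
    pair_cochain R sigma d0 i k (bd_arc sigma d0 n) = (n == i :> nat)%:R - (n == k :> nat)%:R.
  exact: pair_cochain_bd_arc lt_ik lt_k4g (leq_trans (ltn_ord n) le_m).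
under eq_bigr do rewrite omega_bd !mulrb.
by rewrite sumrB -!big_mkcond !(big_ord1_eq _ (fun=> 1)) -!mulrb.
Qed.

Lemma walk_sum_bd_word beta :
  walk_sum alpha (pair_cochain R sigma d0 j l) beta (bd_word sigma d0) = 1.
Proof.
pose c m : R := (alpha beta + ((i < m)%:R - (k < m)%:R)
                 + (alpha beta + ((i < m.+1)%:R - (k < m.+1)%:R))) / 2.
rewrite /bd_word walk_sum_mkseq.
rewrite (eq_bigr (fun m : 'I__ => c m *+ (m == j :> nat) - c m *+ (m == l :> nat))) => [|m _].
  rewrite sumrB !sum_ord_mulrn_eq lt_l4g (ltn_trans lt_jk lt_k4g) /c.
  have [-> ->] : (k < j)%N = false /\ (k < j.+1)%N = false by split; lia.
  have [-> -> -> -> ->] :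
    [/\ (i < j.+1)%N, (i < l)%N, (i < l.+1)%N, (k < l)%N & (k < l.+1)%N] by split; lia.
  by rewrite lt_ij /=; field.
have [lt_m le_m] := (ltn_ord m, ltnW (ltn_ord m)).
rewrite !potential_bd_prefix // pair_cochain_bd_arc ?(ltn_trans lt_jk lt_kl) //.
by rewrite mulrBr !mulr_natr.
Qed.

Hypothesis bd_l : bd_arc sigma d0 l = rev_arc (bd_arc sigma d0 j).
Hypothesis alpha_eqv : forall u v, pi_eqv (bd_word sigma d0) u v -> alpha u = alpha v.

Lemma bounds_sum_coef gamma s L : bounds (bd_word sigma d0) L gamma s ->
  (\sum_(p <- L) p.2)%:~R = walk_sum alpha (pair_cochain R sigma d0 j l) gamma s.
Proof.
move=> bnd; set r := bd_word sigma d0.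
pose V := walk_vertices gamma s ++ flatten [seq walk_vertices p.1 r | p <- L].
have etaN a := pair_cochainN R a bd_l.
rewrite -(chain_pairing_walk_chain alpha_eqv etaN (V := V)) => [|v vs]; last first.
  by rewrite /V mem_cat vs.
have -> : walk_chain r gamma s = face_chain r L.
  by apply/funext => d; apply/funext => x; rewrite bnd.
rewrite chain_pairing_face_chain rmorph_sum; apply: eq_big_seq => p pL.
rewrite chain_pairing_walk_chain ?walk_sum_bd_word ?mulr1 // => v vp.
by rewrite /V mem_cat; apply/orP; right; apply/flatten_mapP; exists p.
Qed.

End FaceBoundary.

Theorem proposition5p4 (R : realType) (g : nat) (sigma : {perm arcT g})
  (d0 : arcT g) (i j k l : nat) (alpha : seq (arcT g) -> R)
  (gamma s : seq (arcT g)) :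
  (2 <= g)%N ->
  (* the single vertex: sigma is one cyclic order of all the arcs *)
  (forall a b : arcT g, fconnect sigma a b) ->
  (* the single face *)
  (forall a b : arcT g, fconnect (face_succ sigma) a b) ->
  (i < j)%N -> (j < k)%N -> (k < l)%N -> (l < 4 * g)%N ->
  bd_arc sigma d0 k = rev_arc (bd_arc sigma d0 i) ->
  bd_arc sigma d0 l = rev_arc (bd_arc sigma d0 j) ->
  (* alpha is a potential on the vertices of \tilde G from which omega derives *)
  (forall u v, pi_eqv (bd_word sigma d0) u v -> alpha u = alpha v) ->
  (forall (u : seq (arcT g)) (a : arcT g),
      alpha (rcons u a) - alpha u = pair_cochain R sigma d0 i k a) ->
  (* c : the walk from gamma along s is closed in \tilde G *)
  pi_eqv (bd_word sigma d0) (gamma ++ s) gamma ->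
  forall A : R,
    signed_area (bd_word sigma d0) gamma s A <->
    A = walk_sum alpha (pair_cochain R sigma d0 j l) gamma s.
Proof.
move=> _ _ one_face lt_ij lt_jk lt_kl lt_l4g _ bd_l alpha_eqv alpha_incr closed A.
have sum_coef := bounds_sum_coef one_face lt_ij lt_jk lt_kl lt_l4g alpha_incr bd_l alpha_eqv.
split=> [[L [bnd ->]] | ->]; first exact: sum_coef.
have [L bnd] := closed_walk_bounded closed.
by exists L; split; last rewrite (sum_coef _ _ _ bnd).
Qed.
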